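(* Let $A$ be a unital algebra over $\mathbb{F}_2$, $(\Omega^1,{\rm d})$ a first order differential calculus on $A$, and $\theta\in\Omega^1$ any element. Let $\bar A$ be the set $A$ with product $a\,\bar\cdot\,b=ab+a+b$ and addition $a\,\bar+\,b=a+b+1$. Let $\bar\Omega^1$ be the set $\Omega^1$ with addition, bimodule structure and differential $\omega\,\bar+\,\eta=\theta+\omega+\eta$, $a\,\bar\cdot\,\omega=a\theta+(a+1)\omega$, $\omega\,\bar\cdot\,a=\theta a+\omega(a+1)$, $\bar{\rm d} a=\theta+{\rm d} a$. Then $(\bar\Omega^1,\bar{\rm d})$ is a first order differential calculus on $\bar A$. Moreover: (i) the maps $a\mapsto\bar a=1+a$ on $A$ and $\omega\mapsto\bar\omega=\theta+\omega$ on $\Omega^1$ make $\bar{\ }:A\to\bar A$ a diffeomorphism; (ii) $\theta$ is the zero element of $\bar\Omega^1$; (iii) ${\rm d} a=\theta a+a\theta$ for all $a\in A$ (i.e. $\theta$ makes $\Omega^1$ inner) if and only if $\bar{\rm d} a=a\,\bar\cdot\,0\ \bar+\ 0\,\bar\cdot\,a$ for all $a$ (i.e. the zero element $0$ of $\Omega^1$ makes $\bar\Omega^1$ inner).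
   Context: A first order differential calculus on a unital algebra $B$ over $\mathbb{F}_2$ is a $B$-bimodule $\Omega^1_B$ with a linear map ${\rm d}:B\to\Omega^1_B$ satisfying ${\rm d}(ab)=({\rm d} a)b+a{\rm d} b$ and such that $\Omega^1_B$ is spanned by elements $a{\rm d} b$. An algebra isomorphism $\phi:A\to B$ between algebras with calculi is a diffeomorphism if there is a linear map $\phi_*:\Omega^1_A\to\Omega^1_B$ with $\phi_*(a\omega)=\phi(a)\phi_*(\omega)$, $\phi_*(\omega a)=\phi_*(\omega)\phi(a)$ and $\phi_*\circ{\rm d}={\rm d}\circ\phi$. The calculus is inner by $\theta$ if ${\rm d} a=\theta a-a\theta$ for all $a$ (over $\mathbb{F}_2$, signs are irrelevant). $\bar A$ is a unital $\mathbb{F}_2$-algebra with zero $1$ and unit $0$. *)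

(* algebras and calculi are given by raw operations plus axioms,
   because A-bar is a *different* algebra structure on the same carrier. *)
From Stdlib Require Import List.

(* A unital algebra over F_2 = unital (possibly noncommutative) ring with 1+1 = 0. *)
Definition is_F2alg (T : Type) (z u : T) (add mul : T -> T -> T) : Prop :=
  (forall a b c, add a (add b c) = add (add a b) c) /\
  (forall a b, add a b = add b a) /\
  (forall a, add z a = a) /\
  (forall a, exists b, add a b = z) /\
  (forall a b c, mul a (mul b c) = mul (mul a b) c) /\
  (forall a, mul u a = a) /\
  (forall a, mul a u = a) /\
  (forall a b c, mul a (add b c) = add (mul a b) (mul a c)) /\
  (forall a b c, mul (add a b) c = add (mul a c) (mul b c)) /\
  add u u = z.

(* First order differential calculus (Omega, d) on the algebra (T, z, u, add, mul):
   an A-bimodule (F_2-scalars act automatically), a linear Leibniz map d,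
   and Omega spanned by elements a db. *)
Definition is_fodc (T : Type) (z u : T) (add mul : T -> T -> T)
  (Om : Type) (oz : Om) (oadd : Om -> Om -> Om)
  (l : T -> Om -> Om) (r : Om -> T -> Om) (d : T -> Om) : Prop :=
  (forall x y w, oadd x (oadd y w) = oadd (oadd x y) w) /\
  (forall x y, oadd x y = oadd y x) /\
  (forall x, oadd oz x = x) /\
  (forall x, exists y, oadd x y = oz) /\
  (forall a x y, l a (oadd x y) = oadd (l a x) (l a y)) /\
  (forall a b x, l (add a b) x = oadd (l a x) (l b x)) /\
  (forall a b x, l (mul a b) x = l a (l b x)) /\
  (forall x, l u x = x) /\
  (forall a x y, r (oadd x y) a = oadd (r x a) (r y a)) /\
  (forall a b x, r x (add a b) = oadd (r x a) (r x b)) /\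
  (forall a b x, r x (mul a b) = r (r x a) b) /\
  (forall x, r x u = x) /\
  (forall a b x, r (l a x) b = l a (r x b)) /\
  (forall a b, d (add a b) = oadd (d a) (d b)) /\
  (forall a b, d (mul a b) = oadd (r (d a) b) (l a (d b))) /\
  (forall x, exists s : list (T * T),
      x = fold_right (fun p acc => oadd (l (fst p) (d (snd p))) acc) oz s).

Definition is_diffeo
  (TA : Type) (uA : TA) (addA mulA : TA -> TA -> TA)
  (OA : Type) (oaddA : OA -> OA -> OA) (lA : TA -> OA -> OA) (rA : OA -> TA -> OA)
  (dA : TA -> OA)
  (TB : Type) (uB : TB) (addB mulB : TB -> TB -> TB)
  (OB : Type) (oaddB : OB -> OB -> OB) (lB : TB -> OB -> OB) (rB : OB -> TB -> OB)
  (dB : TB -> OB)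
  (phi : TA -> TB) (phis : OA -> OB) : Prop :=
  (exists psi : TB -> TA, (forall a, psi (phi a) = a) /\ (forall b, phi (psi b) = b)) /\
  (forall a b, phi (addA a b) = addB (phi a) (phi b)) /\
  (forall a b, phi (mulA a b) = mulB (phi a) (phi b)) /\
  phi uA = uB /\
  (forall x y, phis (oaddA x y) = oaddB (phis x) (phis y)) /\
  (forall a x, phis (lA a x) = lB (phi a) (phis x)) /\
  (forall a x, phis (rA x a) = rB (phis x) (phi a)) /\
  (forall a, phis (dA a) = dB (phi a)).

(* The calculus is inner by theta (over F_2 signs are irrelevant). *)
Definition is_inner (T : Type) (Om : Type) (oadd : Om -> Om -> Om)
  (l : T -> Om -> Om) (r : Om -> T -> Om) (d : T -> Om) (theta : Om) : Prop :=
  forall a, d a = oadd (r theta a) (l a theta).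

Definition bar_add (T : Type) (u : T) (add : T -> T -> T) (a b : T) : T :=
  add (add a b) u.
Definition bar_mul (T : Type) (add mul : T -> T -> T) (a b : T) : T :=
  add (add (mul a b) a) b.
Definition bar_oadd (Om : Type) (oadd : Om -> Om -> Om) (theta x y : Om) : Om :=
  oadd theta (oadd x y).
Definition bar_l (T Om : Type) (u : T) (add : T -> T -> T) (oadd : Om -> Om -> Om)
  (l : T -> Om -> Om) (theta : Om) (a : T) (x : Om) : Om :=
  oadd (l a theta) (l (add a u) x).
Definition bar_r (T Om : Type) (u : T) (add : T -> T -> T) (oadd : Om -> Om -> Om)
  (r : Om -> T -> Om) (theta : Om) (x : Om) (a : T) : Om :=
  oadd (r theta a) (r x (add a u)).
Definition bar_d (T Om : Type) (oadd : Om -> Om -> Om) (d : T -> Om) (theta : Om)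
  (a : T) : Om :=
  oadd theta (d a).

From Stdlib Require Import List.

Set Implicit Arguments.

(* Over F_2 the translations a |-> 1 + a and w |-> theta + w are involutions, and
   every barred operation is exactly the original operation conjugated by them,
   e.g. (1 + a) .bar (1 + b) = 1 + ab and theta + (w + eta) = (theta + w) +bar (theta + eta).
   So the barred structures are images of (A, Omega^1, d) under a bijection that is,
   by construction, a diffeomorphism; the axioms of an algebra and of a calculus
   transfer along it, and theta, being the image of 0, is the zero of Omega-bar. *)

Definition is_boolean_group (G : Type) (e : G) (p : G -> G -> G) : Prop :=
  (forall a b c, p a (p b c) = p (p a b) c) /\ (forall a b, p a b = p b a) /\
  (forall a, p e a = a) /\ (forall a, p a a = e).

Lemma idempotent_eq_unit (G : Type) (e : G) (p : G -> G -> G)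
  (p_assoc : forall a b c, p a (p b c) = p (p a b) c)
  (p_comm : forall a b, p a b = p b a) (p_unit : forall a, p e a = a)
  (p_inv : forall a, exists b, p a b = e) (y : G) :
  p y y = y -> y = e.
Proof.
  intro idem. destruct (p_inv y) as [y' yy'].
  rewrite <- yy'. rewrite <- idem at 2. rewrite <- p_assoc, yy', p_comm, p_unit. reflexivity.
Qed.

Section BooleanGroup.

Variables (G : Type) (e : G) (p : G -> G -> G).
Hypothesis Hp : is_boolean_group e p.

Lemma boolean_group_cancel x y : p x (p x y) = y.
Proof. destruct Hp as (assoc & _ & unit & self). rewrite assoc, self, unit. reflexivity. Qed.

Lemma boolean_group_translate_op c a b : p c (p a b) = p c (p (p c a) (p c b)).
Proof.
  destruct Hp as (assoc & comm & _ & _).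
  rewrite (assoc (p c a) c b), (comm (p c a) c), boolean_group_cancel. reflexivity.
Qed.

Lemma boolean_group_translate_via c m n : p c n = p (p c m) (p m n).
Proof.
  destruct Hp as (assoc & _ & _ & _). rewrite <- assoc, boolean_group_cancel. reflexivity.
Qed.

End BooleanGroup.

Section Transport.

Variables (T T' : Type) (z u : T) (z' u' : T') (add mul : T -> T -> T)
  (add' mul' : T' -> T' -> T') (f : T -> T').
Hypothesis f_surj : forall y, exists x, y = f x.
Hypothesis f_add : forall a b, f (add a b) = add' (f a) (f b).
Hypothesis f_mul : forall a b, f (mul a b) = mul' (f a) (f b).
Hypothesis f_zero : f z = z'.
Hypothesis f_unit : f u = u'.

Lemma is_F2alg_image : is_F2alg T z u add mul -> is_F2alg T' z' u' add' mul'.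
Proof.
  intros (h1 & h2 & h3 & h4 & h5 & h6 & h7 & h8 & h9 & h10). subst z' u'.
  repeat split; intros;
  repeat match goal with y : T' |- _ => destruct (f_surj y) as [? ->]; clear y end;
  repeat (rewrite <- f_add || rewrite <- f_mul); try (f_equal; solve [auto]).
  match goal with x : T |- _ => destruct (h4 x) as [y xy] end.
  exists (f y). rewrite <- f_add, xy. reflexivity.
Qed.

Variables (Om Om' : Type) (oz : Om) (oz' : Om') (oadd : Om -> Om -> Om)
  (oadd' : Om' -> Om' -> Om') (l : T -> Om -> Om) (l' : T' -> Om' -> Om')
  (r : Om -> T -> Om) (r' : Om' -> T' -> Om') (d : T -> Om) (d' : T' -> Om')
  (k : Om -> Om').
Hypothesis k_surj : forall y, exists x, y = k x.
Hypothesis k_oadd : forall x y, k (oadd x y) = oadd' (k x) (k y).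
Hypothesis k_l : forall a x, k (l a x) = l' (f a) (k x).
Hypothesis k_r : forall a x, k (r x a) = r' (k x) (f a).
Hypothesis k_d : forall a, k (d a) = d' (f a).
Hypothesis k_zero : k oz = oz'.

Lemma is_fodc_image :
  is_fodc T z u add mul Om oz oadd l r d -> is_fodc T' z' u' add' mul' Om' oz' oadd' l' r' d'.
Proof.
  intros (h1 & h2 & h3 & h4 & h5 & h6 & h7 & h8 & h9 & h10 & h11 & h12 & h13 & h14 & h15 & h16).
  subst z' u' oz'.
  repeat split; intros;
  repeat match goal with y : T' |- _ => destruct (f_surj y) as [? ->]; clear y end;
  repeat match goal with y : Om' |- _ => destruct (k_surj y) as [? ->]; clear y end;
  repeat (rewrite <- f_add || rewrite <- f_mul || rewrite <- k_oadd || rewrite <- k_l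
          || rewrite <- k_r || rewrite <- k_d);
  try (f_equal; solve [auto]).
  - match goal with x : Om |- _ => destruct (h4 x) as [y xy] end.
    exists (k y). rewrite <- k_oadd, xy. reflexivity.
  - match goal with x : Om |- _ => destruct (h16 x) as [s ->] end.
    exists (map (fun p => (f (fst p), f (snd p))) s).
    induction s as [|p s IH]; simpl; [reflexivity|].
    rewrite k_oadd, IH, k_l, k_d. reflexivity.
Qed.

End Transport.

Section Bar.

Variables (T : Type) (z u : T) (add mul : T -> T -> T)
  (Om : Type) (oz : Om) (oadd : Om -> Om -> Om)
  (l : T -> Om -> Om) (r : Om -> T -> Om) (d : T -> Om) (theta : Om).
Hypothesis HA : is_F2alg T z u add mul.
Hypothesis HOm : is_fodc T z u add mul Om oz oadd l r d.

Lemma F2alg_mul_zero a : mul a z = z.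
Proof.
  destruct HA as (assoc & comm & unit & inv & _ & _ & _ & distr & _).
  apply (idempotent_eq_unit _ assoc comm unit inv).
  rewrite <- distr, unit. reflexivity.
Qed.

Lemma F2alg_boolean_group : is_boolean_group z add.
Proof.
  destruct HA as (assoc & comm & unit & _ & _ & _ & mul1 & distr & _ & char2).
  repeat split; try assumption.
  intro a. rewrite <- (mul1 a), <- distr, char2. apply F2alg_mul_zero.
Qed.

Lemma fodc_l_zero x : l z x = oz.
Proof.
  destruct HA as (_ & _ & unit & _).
  destruct HOm as (assoc & comm & ounit & inv & _ & ldistr & _).
  apply (idempotent_eq_unit _ assoc comm ounit inv). rewrite <- ldistr, unit. reflexivity.
Qed.

Lemma fodc_boolean_group : is_boolean_group oz oadd.
Proof.
  destruct HA as (_ & _ & _ & _ & _ & _ & _ & _ & _ & char2).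
  destruct HOm as (assoc & comm & unit & _ & _ & ldistr & _ & lunit & _).
  repeat split; try assumption.
  intro x. rewrite <- (lunit x), <- ldistr, char2. apply fodc_l_zero.
Qed.

Lemma fodc_l_zero_form a : l a oz = oz.
Proof.
  destruct HOm as (assoc & comm & unit & inv & ladd & _).
  apply (idempotent_eq_unit _ assoc comm unit inv). rewrite <- ladd, unit. reflexivity.
Qed.

Lemma fodc_r_zero_form a : r oz a = oz.
Proof.
  destruct HOm as (assoc & comm & unit & inv & _ & _ & _ & _ & radd & _).
  apply (idempotent_eq_unit _ assoc comm unit inv). rewrite <- radd, unit. reflexivity.
Qed.

Lemma fodc_d_unit : d u = oz.
Proof.
  destruct HA as (_ & _ & _ & _ & _ & mul1l & _).
  destruct HOm as (_ & _ & _ & _ & _ & _ & _ & lunit & _ & _ & _ & runit & _ & _ & leibniz & _).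
  pose proof (leibniz u u) as duu. rewrite mul1l, lunit, runit in duu.
  rewrite duu at 1. apply fodc_boolean_group.
Qed.

Let shift a := add u a.
Let oshift x := oadd theta x.

Lemma shift_involutive a : shift (shift a) = a.
Proof. apply (boolean_group_cancel F2alg_boolean_group). Qed.

Lemma oshift_involutive x : oshift (oshift x) = x.
Proof. apply (boolean_group_cancel fodc_boolean_group). Qed.

Lemma shift_add a b : shift (add a b) = bar_add T u add (shift a) (shift b).
Proof.
  destruct F2alg_boolean_group as (_ & comm & _).
  unfold shift, bar_add. rewrite (comm _ u). apply (boolean_group_translate_op F2alg_boolean_group).
Qed.

Lemma shift_mul a b : shift (mul a b) = bar_mul T add mul (shift a) (shift b).
Proof.
  pose proof F2alg_boolean_group as GA. pose proof (boolean_group_cancel GA) as cancel.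
  destruct GA as (assoc & comm & _).
  destruct HA as (_ & _ & _ & _ & _ & mul1l & mul1r & distrl & distrr & _).
  unfold shift, bar_mul.
  (* (u + a)(u + b) = (u + b) + (a + ab), and the two copies of u + b cancel *)
  rewrite distrr, mul1l, distrl, mul1r.
  rewrite (comm _ (add u b)), <- (assoc (add u b)), cancel.
  rewrite (comm (add a _)), <- assoc, cancel. reflexivity.
Qed.

Lemma shift_zero : shift z = u.
Proof.
  destruct F2alg_boolean_group as (_ & comm & unit & _). unfold shift. rewrite comm. apply unit.
Qed.

Lemma shift_unit : shift u = z.
Proof. apply F2alg_boolean_group. Qed.

Lemma oshift_oadd x y : oshift (oadd x y) = bar_oadd Om oadd theta (oshift x) (oshift y).
Proof. apply (boolean_group_translate_op fodc_boolean_group). Qed.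

Lemma oshift_l a x : oshift (l a x) = bar_l T Om u add oadd l theta (shift a) (oshift x).
Proof.
  destruct F2alg_boolean_group as (_ & comm & _).
  destruct HOm as (_ & _ & _ & _ & ladd & ldistr & _ & lunit & _).
  unfold oshift, shift, bar_l.
  rewrite (comm _ u), shift_involutive.
  rewrite ldistr, lunit, ladd. apply (boolean_group_translate_via fodc_boolean_group).
Qed.

Lemma oshift_r a x : oshift (r x a) = bar_r T Om u add oadd r theta (oshift x) (shift a).
Proof.
  destruct F2alg_boolean_group as (_ & comm & _).
  destruct HOm as (_ & _ & _ & _ & _ & _ & _ & _ & radd & rdistr & _ & runit & _).
  unfold oshift, shift, bar_r.
  rewrite (comm _ u), shift_involutive.
  rewrite rdistr, runit, radd. apply (boolean_group_translate_via fodc_boolean_group).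
Qed.

Lemma oshift_d a : oshift (d a) = bar_d T Om oadd d theta (shift a).
Proof.
  destruct HOm as (_ & _ & unit & _ & _ & _ & _ & _ & _ & _ & _ & _ & _ & dadd & _).
  unfold oshift, shift, bar_d. rewrite dadd, fodc_d_unit, unit. reflexivity.
Qed.

Lemma oshift_zero : oshift oz = theta.
Proof.
  destruct fodc_boolean_group as (_ & comm & unit & _). unfold oshift. rewrite comm. apply unit.
Qed.

Lemma shift_surj a : exists b, a = shift b.
Proof. exists (shift a). symmetry. apply shift_involutive. Qed.

Lemma oshift_surj x : exists y, x = oshift y.
Proof. exists (oshift x). symmetry. apply oshift_involutive. Qed.

Lemma bar_is_F2alg : is_F2alg T u z (bar_add T u add) (bar_mul T add mul).
Proof. exact (is_F2alg_image _ _ _ shift_surj shift_add shift_mul shift_zero shift_unit HA). Qed.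

Lemma bar_is_fodc :
  is_fodc T u z (bar_add T u add) (bar_mul T add mul) Om theta (bar_oadd Om oadd theta)
    (bar_l T Om u add oadd l theta) (bar_r T Om u add oadd r theta) (bar_d T Om oadd d theta).
Proof.
  exact (is_fodc_image _ _ _ shift_surj shift_add shift_mul shift_zero shift_unit
           _ _ _ _ _ oshift_surj oshift_oadd oshift_l oshift_r oshift_d oshift_zero HOm).
Qed.

Lemma shift_is_diffeo :
  is_diffeo T u add mul Om oadd l r d T z (bar_add T u add) (bar_mul T add mul) Om
    (bar_oadd Om oadd theta) (bar_l T Om u add oadd l theta) (bar_r T Om u add oadd r theta)
    (bar_d T Om oadd d theta) shift oshift.
Proof.
  split; [exists shift; split; exact shift_involutive|].
  repeat split.
  - exact shift_add.
  - exact shift_mul.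
  - exact shift_unit.
  - exact oshift_oadd.
  - exact oshift_l.
  - exact oshift_r.
  - exact oshift_d.
Qed.

Lemma bar_oadd_theta_l x : bar_oadd Om oadd theta theta x = x.
Proof. apply (boolean_group_cancel fodc_boolean_group). Qed.

Lemma bar_inner_zero_iff :
  is_inner T Om oadd l r d theta <->
  is_inner T Om (bar_oadd Om oadd theta) (bar_l T Om u add oadd l theta)
    (bar_r T Om u add oadd r theta) (bar_d T Om oadd d theta) oz.
Proof.
  destruct fodc_boolean_group as (_ & comm & unit & _).
  assert (bar_inner_at : forall a,
    bar_oadd Om oadd theta (bar_r T Om u add oadd r theta oz a) (bar_l T Om u add oadd l theta a oz)
    = oadd theta (oadd (r theta a) (l a theta))).
  { intro a. unfold bar_oadd, bar_r, bar_l.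
    rewrite fodc_r_zero_form, fodc_l_zero_form, !(comm _ oz), !unit. reflexivity. }
  pose proof (boolean_group_cancel fodc_boolean_group theta) as cancel.
  unfold is_inner, bar_d. split; intros inner a.
  - rewrite bar_inner_at, inner. reflexivity.
  - specialize (inner a). rewrite bar_inner_at in inner.
    rewrite <- (cancel (d a)), inner. apply cancel.
Qed.

End Bar.

Theorem proposition5p3
  (T : Type) (z u : T) (add mul : T -> T -> T)
  (Om : Type) (oz : Om) (oadd : Om -> Om -> Om)
  (l : T -> Om -> Om) (r : Om -> T -> Om) (d : T -> Om)
  (HA : is_F2alg T z u add mul)
  (HOm : is_fodc T z u add mul Om oz oadd l r d)
  (theta : Om) :
  let addb := bar_add T u add in
  let mulb := bar_mul T add mul in
  let oaddb := bar_oadd Om oadd theta in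
  let lb := bar_l T Om u add oadd l theta in
  let rb := bar_r T Om u add oadd r theta in
  let db := bar_d T Om oadd d theta in
  (* A-bar is a unital F_2-algebra with zero 1 and unit 0 *)
  is_F2alg T u z addb mulb /\
  (* (Omega-bar, d-bar) is a first order differential calculus on A-bar, with zero theta *)
  is_fodc T u z addb mulb Om theta oaddb lb rb db /\
  (* (i) a |-> 1 + a, omega |-> theta + omega is a diffeomorphism A -> A-bar *)
  is_diffeo T u add mul Om oadd l r d
            T z addb mulb Om oaddb lb rb db
            (fun a => add u a) (fun x => oadd theta x) /\
  (* (ii) theta is the zero element of Omega-bar *)
  (forall x, oaddb theta x = x) /\
  (* (iii) theta makes Omega inner iff 0 makes Omega-bar inner *)
  (is_inner T Om oadd l r d theta <-> is_inner T Om oaddb lb rb db oz).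
Proof.
  cbv zeta. split; [|split; [|split; [|split]]].
  - exact (bar_is_F2alg HA).
  - exact (bar_is_fodc theta HA HOm).
  - exact (shift_is_diffeo theta HA HOm).
  - exact (bar_oadd_theta_l theta HA HOm).
  - exact (bar_inner_zero_iff theta HA HOm).
Qed.
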